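(* Let $U\subset\mathbb{R}^s$ be open, $X:U\to\mathbb{R}^{n+1}_1$ a spacelike embedding, $M=X(U)$, $n^T$ a smooth future directed unit timelike normal field, and $H:U\times\mathbb{S}^{n-1}_+\to\mathbb{R}$, $H(u,v)=\langle X(u),v\rangle$, with $h_v=H(\cdot,v)$. Let $u_0\in U$, $p_0=X(u_0)$, $v_0\in\mathbb{S}^{n-1}_+$. Then: (1) $\frac{\partial H}{\partial u_i}(u_0,v_0)=0$ for all $i=1,\dots,s$ if and only if there exists $\xi_0\in N_1(M)_{p_0}[n^T]$ with $v_0=\widetilde{\mathbb{LG}}(n^T)(p_0,\xi_0)$. Suppose now $v_0=\widetilde{\mathbb{LG}}(n^T)(p_0,\xi_0)$ with $\xi_0\in N_1(M)_{p_0}[n^T]$, and let $n^S$ be a local smooth section of $N_1(M)[n^T]$ with $n^S(u_0)=\xi_0$. Then (2) $p_0$ is a $(n^T(u_0),\xi_0)$-parabolic point (i.e. $K_\ell(n^T,n^S)(u_0)=0$) if and only if $\det\mathrm{Hess}(h_{v_0})(u_0)=0$; (3) $p_0$ is a flat $(n^T(u_0),\xi_0)$-umbilical point (i.e. $S_{p_0}(n^T,n^S)=0$) if and only if $\mathrm{rank}\,\mathrm{Hess}(h_{v_0})(u_0)=0$; (4) $u_0$ is a non-degenerate critical point of $h_{v_0}$ if and only if $(p_0,\xi_0)$ is a regular point of $\widetilde{\mathbb{LG}}(n^T)$.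
   Context: $\mathbb{R}^{n+1}_1$ is $\mathbb{R}^{n+1}$ with $\langle x,y\rangle=-x_0y_0+\sum_{i=1}^n x_iy_i$; spacelike embedding means tangent spaces consist of vectors with $\langle v,v\rangle>0$. $\mathbb{S}^{n-1}_+=\{x:\langle x,x\rangle=0,x_0=1\}$; for nonzero lightlike $x$, $\widetilde x=x/x_0$. $N_p(M)$ is the pseudo-orthogonal complement of $T_pM$; $n^T(u)\in N_{X(u)}(M)$, $\langle n^T,n^T\rangle=-1$, $n^T_0>0$. $N_1(M)_p[n^T]=\{\xi\in N_p(M):\langle\xi,\xi\rangle=1,\langle\xi,n^T(p)\rangle=0\}$, $N_1(M)[n^T]=\bigcup_pN_1(M)_p[n^T]$, and $\widetilde{\mathbb{LG}}(n^T):N_1(M)[n^T]\to\mathbb{S}^{n-1}_+$, $(p,\xi)\mapsto\widetilde{n^T(p)+\xi}$ (a map between $(n-1)$-manifolds). With $\pi^\tau:T_pM\oplus N_p(M)\to T_pM$ the projection, $S_p(n^T,n^S)=-\pi^\tau\circ d_p(n^T+n^S)$ and $K_\ell(n^T,n^S)=\det S_p(n^T,n^S)$; these depend at $u_0$ only on $n^T(u_0)$ and $n^S(u_0)$. *)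

From HB Require Import structures.
From mathcomp Require Import all_boot all_order all_algebra.
From mathcomp Require Import all_classical all_reals all_analysis.
Set Implicit Arguments. Unset Strict Implicit. Unset Printing Implicit Defensive.
Import Order.TTheory GRing.Theory Num.Theory.
Import numFieldNormedType.Exports.
Local Open Scope classical_set_scope.
Local Open Scope ring_scope.

(* Points of R^{n+1}_1 are row vectors 'rV[R]_(n.+1); coordinate ord0 is x_0.
   Points of the parameter space R^s are row vectors 'rV[R]_s. *)

Section LorentzDefs.
Context {R : realType}.

Definition lprod {n : nat} (x y : 'rV[R]_n.+1) : R :=
  - (x 0 ord0 * y 0 ord0) + \sum_(i < n.+1 | i != ord0) x 0 i * y 0 i.

Definition ebasis {s : nat} (i : 'I_s) : 'rV[R]_s := delta_mx 0 i.

Definition partial {s : nat} {V : normedModType R} (i : 'I_s)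
  (f : 'rV[R]_s -> V) (u : 'rV[R]_s) : V := derive f u (ebasis i).

Fixpoint iter_partial {s : nat} {V : normedModType R} (l : seq 'I_s)
  (f : 'rV[R]_s -> V) : 'rV[R]_s -> V :=
  match l with
  | [::] => f
  | i :: l' => partial i (iter_partial l' f)
  end.

Definition smooth_on {s : nat} {V : normedModType R} (U : set 'rV[R]_s)
  (f : 'rV[R]_s -> V) : Prop :=
  forall l : seq 'I_s,
    (forall (i : 'I_s) (u : 'rV[R]_s), U u -> derivable (iter_partial l f) u (ebasis i))
    /\ (forall u, U u -> {for u, continuous (iter_partial l f)}).

Definition tangent_vec {s n : nat} (X : 'rV[R]_s -> 'rV[R]_n.+1) (u : 'rV[R]_s)
  (a : 'rV[R]_s) : 'rV[R]_n.+1 := \sum_(i < s) a 0 i *: partial i X u.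

(* X : U -> R^{n+1}_1 is a spacelike embedding: smooth, injective, a
   homeomorphism onto its image, and every nonzero tangent vector
   dX_u(a) (a <> 0) is spacelike (this includes the immersion property). *)
Definition spacelike_embedding {s n : nat} (U : set 'rV[R]_s)
  (X : 'rV[R]_s -> 'rV[R]_n.+1) : Prop :=
  [/\ smooth_on U X,
      (forall u u', U u -> U u' -> X u = X u' -> u = u'),
      (forall u, U u -> forall e : R, 0 < e -> exists2 d : R, 0 < d &
          forall u', U u' -> `|X u' - X u| < d -> `|u' - u| < e)
    & (forall u, U u -> forall a : 'rV[R]_s, a != 0 ->
          0 < lprod (tangent_vec X u a) (tangent_vec X u a))].

Definition in_normal {s n : nat} (X : 'rV[R]_s -> 'rV[R]_n.+1) (u : 'rV[R]_s)
  (xi : 'rV[R]_n.+1) : Prop :=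
  forall i : 'I_s, lprod xi (partial i X u) = 0.

Definition future_unit_timelike_normal {s n : nat} (U : set 'rV[R]_s)
  (X : 'rV[R]_s -> 'rV[R]_n.+1) (nT : 'rV[R]_s -> 'rV[R]_n.+1) : Prop :=
  smooth_on U nT /\
  forall u, U u ->
    [/\ in_normal X u (nT u), lprod (nT u) (nT u) = -1 & 0 < nT u 0 ord0].

Definition in_N1 {s n : nat} (X : 'rV[R]_s -> 'rV[R]_n.+1)
  (nT : 'rV[R]_s -> 'rV[R]_n.+1) (u : 'rV[R]_s) (xi : 'rV[R]_n.+1) : Prop :=
  [/\ in_normal X u xi, lprod xi xi = 1 & lprod xi (nT u) = 0].

Definition in_Splus {n : nat} (v : 'rV[R]_n.+1) : Prop :=
  lprod v v = 0 /\ v 0 ord0 = 1.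

Definition tilde {n : nat} (x : 'rV[R]_n.+1) : 'rV[R]_n.+1 := (x 0 ord0)^-1 *: x.

Definition LGt {s n : nat} (nT : 'rV[R]_s -> 'rV[R]_n.+1) (u : 'rV[R]_s)
  (xi : 'rV[R]_n.+1) : 'rV[R]_n.+1 := tilde (nT u + xi).

Definition Hfun {s n : nat} (X : 'rV[R]_s -> 'rV[R]_n.+1) (u : 'rV[R]_s)
  (v : 'rV[R]_n.+1) : R := lprod (X u) v.

Definition hfun {s n : nat} (X : 'rV[R]_s -> 'rV[R]_n.+1) (v : 'rV[R]_n.+1) :
  'rV[R]_s -> R := fun u => Hfun X u v.

Definition hessian {s : nat} (f : 'rV[R]_s -> R) (u : 'rV[R]_s) : 'M[R]_s :=
  \matrix_(i, j) partial i (partial j f) u.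

Definition gram {s n : nat} (X : 'rV[R]_s -> 'rV[R]_n.+1) (u : 'rV[R]_s) : 'M[R]_s :=
  \matrix_(i, j) lprod (partial i X u) (partial j X u).

(* coordinates c (w.r.t. the frame X_{u_k}) of pi^tau(w):
   pi^tau(w) = sum_k c_k X_{u_k} with <pi^tau(w), X_{u_l}> = <w, X_{u_l}> *)
Definition tcoords {s n : nat} (X : 'rV[R]_s -> 'rV[R]_n.+1) (u : 'rV[R]_s)
  (w : 'rV[R]_n.+1) : 'rV[R]_s :=
  (\row_l lprod w (partial l X u)) *m invmx (gram X u).

Definition tangent_proj {s n : nat} (X : 'rV[R]_s -> 'rV[R]_n.+1) (u : 'rV[R]_s)
  (w : 'rV[R]_n.+1) : 'rV[R]_n.+1 := tangent_vec X u (tcoords X u w).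

(* S_p(n^T,n^S) applied to the tangent vector dX_u(a) :
   - pi^tau (d(n^T + n^S)(dX_u a)) = - pi^tau (sum_j a_j d_j (n^T+n^S)(u)) *)
Definition shape_op {s n : nat} (X nT nS : 'rV[R]_s -> 'rV[R]_n.+1) (u : 'rV[R]_s)
  (a : 'rV[R]_s) : 'rV[R]_n.+1 :=
  - tangent_proj X u (\sum_(j < s) a 0 j *: partial j (nT \+ nS) u).

(* matrix of S_p(n^T,n^S) in the basis X_{u_1},...,X_{u_s}
   (row j = coordinates of S_p(X_{u_j})) *)
Definition shape_mx {s n : nat} (X nT nS : 'rV[R]_s -> 'rV[R]_n.+1) (u : 'rV[R]_s) :
  'M[R]_s :=
  \matrix_(j, k) tcoords X u (shape_op X nT nS u (ebasis j)) 0 k.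

Definition Kl {s n : nat} (X nT nS : 'rV[R]_s -> 'rV[R]_n.+1) (u : 'rV[R]_s) : R :=
  \det (shape_mx X nT nS u).

Definition flat_umbilical {s n : nat} (X nT nS : 'rV[R]_s -> 'rV[R]_n.+1)
  (u : 'rV[R]_s) : Prop :=
  forall a : 'rV[R]_s, shape_op X nT nS u a = 0.

Definition nondeg_critical {s : nat} (f : 'rV[R]_s -> R) (u : 'rV[R]_s) : Prop :=
  (forall i : 'I_s, partial i f u = 0) /\ \det (hessian f u) != 0.

(* N_1(M)[n^T] is viewed (via X) as the level set
   { (u, xi) : <xi, X_{u_i}(u)> = 0 (all i), <xi, n^T(u)> = 0, <xi, xi> = 1 }
   in U x R^{n+1}; its tangent space at (u, xi) is the kernel of the
   differential of the defining equations.  Differentials are computed as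
   derivatives along the line t |-> (u + t a, xi + t b) at t = 0. *)
Definition tangent_N1 {s n : nat} (X nT : 'rV[R]_s -> 'rV[R]_n.+1) (u : 'rV[R]_s)
  (xi : 'rV[R]_n.+1) (a : 'rV[R]_s) (b : 'rV[R]_n.+1) : Prop :=
  [/\ (forall i : 'I_s,
         derive1 (fun t : R => lprod (xi + t *: b) (partial i X (u + t *: a))) 0 = 0),
      derive1 (fun t : R => lprod (xi + t *: b) (nT (u + t *: a))) 0 = 0
    & derive1 (fun t : R => lprod (xi + t *: b) (xi + t *: b)) 0 = 0].

Definition tangent_Splus {n : nat} (v w : 'rV[R]_n.+1) : Prop :=
  lprod v w = 0 /\ w 0 ord0 = 0.

Definition LG_regular_point {s n : nat} (X nT : 'rV[R]_s -> 'rV[R]_n.+1)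
  (u : 'rV[R]_s) (xi : 'rV[R]_n.+1) : Prop :=
  forall w : 'rV[R]_n.+1, tangent_Splus (LGt nT u xi) w ->
    exists (a : 'rV[R]_s) (b : 'rV[R]_n.+1),
      tangent_N1 X nT u xi a b /\
      derive1 (fun t : R => LGt nT (u + t *: a) (xi + t *: b)) 0 = w.

End LorentzDefs.

From HB Require Import structures.
From mathcomp Require Import all_boot all_order all_algebra.
From mathcomp Require Import all_classical all_reals all_analysis.
From mathcomp Require Import ring lra.
Import Order.TTheory GRing.Theory Num.Theory.
Import numFieldNormedType.Exports.
Local Open Scope classical_set_scope.
Local Open Scope ring_scope.

(* Everything follows from differentiating the identities that define the
   frame along M.  Since dH/du_i = <X_{u_i}, v>, the point u0 is critical for
   h_v exactly when v is normal to M at p0; a lightlike normal v satisfies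
   <v, n^T> <> 0 and is therefore a multiple of n^T + xi for a unit normal xi
   orthogonal to n^T.  If n^T(u0) + xi0 = c v0 (c <> 0 is the x_0-coordinate),
   differentiating <X_{u_l}, n^T + n^S> = 0 gives
   <d_j (n^T + n^S), X_{u_l}> = - c Hess(h_{v0})_{jl}, so the matrix of
   S_{p0}(n^T, n^S) in the coordinate frame is c Hess(h_{v0}) G^-1, where the
   Gram matrix G of the frame is positive definite because M is spacelike;
   this gives (2) and (3).  For (4), the derivative of the lightcone Gauss map
   along a tangent vector (a, b) of N_1(M)[n^T] is c^-1 (w - w_0 v0) with
   w = d n^T(a) + b, and its tangential part is - c^-1 Hess(h_{v0}) a up to
   the Gram matrix, so surjectivity amounts to the invertibility of the
   Hessian. *)

Section LorentzProduct.
Context {R : realType} {n : nat}.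
Implicit Types x y z : 'rV[R]_n.+1.

Definition lsign (i : 'I_n.+1) : R := if i == ord0 then -1 else 1.

Lemma lprodE x y : lprod x y = \sum_(i < n.+1) lsign i * (x 0 i * y 0 i).
Proof.
rewrite /lprod [RHS](bigD1 ord0) //= /lsign eqxx mulN1r; congr (_ + _).
by apply: eq_bigr => i /negbTE ->; rewrite mul1r.
Qed.

Lemma lprodC x y : lprod x y = lprod y x.
Proof. by rewrite !lprodE; apply: eq_bigr => i _; rewrite (mulrC (x 0 i)). Qed.

Lemma lprodDl x y z : lprod (x + y) z = lprod x z + lprod y z.
Proof.
by rewrite !lprodE -big_split; apply: eq_bigr => i _; rewrite !mxE mulrDl mulrDr.
Qed.

Lemma lprodZl (a : R) x z : lprod (a *: x) z = a * lprod x z.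
Proof. by rewrite !lprodE mulr_sumr; apply: eq_bigr => i _; rewrite !mxE; ring. Qed.

Lemma lprod0l z : lprod 0 z = 0.
Proof. by rewrite -(scale0r 0) lprodZl mul0r. Qed.

Lemma lprodNl x z : lprod (- x) z = - lprod x z.
Proof. by rewrite -scaleN1r lprodZl mulN1r. Qed.

Lemma lprodBl x y z : lprod (x - y) z = lprod x z - lprod y z.
Proof. by rewrite lprodDl lprodNl. Qed.

Lemma lprodDr x y z : lprod z (x + y) = lprod z x + lprod z y.
Proof. by rewrite !(lprodC z) lprodDl. Qed.

Lemma lprodZr (a : R) x z : lprod z (a *: x) = a * lprod z x.
Proof. by rewrite !(lprodC z) lprodZl. Qed.

Lemma lprod0r z : lprod z 0 = 0.
Proof. by rewrite lprodC lprod0l. Qed.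

Lemma lprodBr x y z : lprod z (x - y) = lprod z x - lprod z y.
Proof. by rewrite !(lprodC z) lprodBl. Qed.

Lemma lprod_suml (I : Type) (r : seq I) (P : pred I) (F : I -> 'rV[R]_n.+1) y :
  lprod (\sum_(i <- r | P i) F i) y = \sum_(i <- r | P i) lprod (F i) y.
Proof.
by apply: (big_morph (fun x => lprod x y)) => [x z|]; rewrite ?lprodDl ?lprod0l.
Qed.

Lemma lprod_sumr (I : Type) (r : seq I) (P : pred I) (F : I -> 'rV[R]_n.+1) y :
  lprod y (\sum_(i <- r | P i) F i) = \sum_(i <- r | P i) lprod y (F i).
Proof. by rewrite lprodC lprod_suml; apply: eq_bigr => i _; rewrite lprodC. Qed.

(* Cauchy-Schwarz in disguise: expand |x' - x_0 y'|^2 >= 0 on the spatial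
   coordinates. *)
Lemma lprod_lightlike_timelike_neq0 y x :
  lprod y y = 0 -> y 0 ord0 = 1 -> lprod x x = -1 -> lprod y x != 0.
Proof.
move=> yy y0 xx; apply/negP => /eqP yx.
pose sp (p q : 'rV[R]_n.+1) := \sum_(i < n.+1 | i != ord0) p 0 i * q 0 i.
have spE (p q : 'rV[R]_n.+1) : lprod p q = - (p 0 ord0 * q 0 ord0) + sp p q by [].
set x0 := x 0 ord0.
have E : \sum_(i < n.+1 | i != ord0) (x 0 i - x0 * y 0 i) ^+ 2 =
    sp x x - (2 * x0) * sp y x + x0 ^+ 2 * sp y y.
  rewrite /sp !mulr_sumr -sumrB -big_split /=; apply: eq_bigr => i _; ring.
have : 0 <= \sum_(i < n.+1 | i != ord0) (x 0 i - x0 * y 0 i) ^+ 2.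
  by apply: sumr_ge0 => i _; apply: sqr_ge0.
rewrite E; move: yy y0 xx yx; rewrite !spE => yy y0 xx yx.
have -> : sp x x = x0 ^+ 2 - 1 by rewrite /x0; lra.
have -> : sp y x = x0 by move: yx; rewrite y0 /x0; lra.
have -> : sp y y = 1 by move: yy; rewrite y0; lra.
lra.
Qed.

End LorentzProduct.

Section DerivativeRules.
Context {R : realType}.

Lemma is_derive_coord {V : normedModType R} {m k : nat} (f : V -> 'M[R]_(m, k))
    x v df i j :
  is_derive x v f df -> is_derive x v (fun y => f y i j) (df i j).
Proof.
move=> [fd <-]; split; first by move/derivable_mxP: fd; apply.
by rewrite derive_mx // mxE.
Qed.

Lemma is_derive_mx {V : normedModType R} {m k : nat} (f : V -> 'M[R]_(m, k)) x v
    (df : 'M[R]_(m, k)) :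
  (forall i j, is_derive x v (fun y => f y i j) (df i j)) -> is_derive x v f df.
Proof.
move=> H; have fd : derivable f x v by apply/derivable_mxP => i j; have [] := H i j.
split => //; rewrite derive_mx //; apply/matrixP => i j; rewrite mxE.
by have [] := H i j.
Qed.

Lemma is_derive_lprod {V : normedModType R} {n : nat} {f g : V -> 'rV[R]_n.+1}
    {x v df dg} :
  is_derive x v f df -> is_derive x v g dg ->
  is_derive x v (fun y => lprod (f y) (g y)) (lprod df (g x) + lprod (f x) dg).
Proof.
move=> hf hg.
have -> : (fun y => lprod (f y) (g y)) =
    \sum_(i < n.+1) (fun y => lsign i * (f y 0 i * g y 0 i)).
  by apply/funext => y; rewrite fct_sumE lprodE.
have -> : lprod df (g x) + lprod (f x) dg =
    \sum_(i < n.+1) lsign i * (f x 0 i * dg 0 i + g x 0 i * df 0 i).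
  by rewrite !lprodE -big_split; apply: eq_bigr => i _ /=; ring.
apply: is_derive_sum => i; apply: is_deriveZ; apply: is_deriveM.
  exact: is_derive_coord hf.
exact: is_derive_coord hg.
Qed.

Lemma is_derive_lprodl {V : normedModType R} {n : nat} {f : V -> 'rV[R]_n.+1} {x v df}
    (w : 'rV[R]_n.+1) :
  is_derive x v f df -> is_derive x v (fun y => lprod (f y) w) (lprod df w).
Proof.
by move=> hf; have := is_derive_lprod hf (is_derive_cst w x v); rewrite lprod0r addr0.
Qed.

Lemma is_derive_line {V W : normedModType R} (g : V -> W) u a t0 dg :
  is_derive (u + t0 *: a) a g dg -> is_derive t0 1 (fun t : R => g (u + t *: a)) dg.
Proof.
have E : (fun h : R => h^-1 *: (((fun t : R => g (u + t *: a)) \o shift t0) (h *: 1)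
                                 - g (u + t0 *: a)))
  = (fun h : R => h^-1 *: ((g \o shift (u + t0 *: a)) (h *: a) - g (u + t0 *: a))).
  apply/funext => h /=; congr (_ *: (g _ - _)).
  have -> : h%:A = h :> R by rewrite /GRing.scale /= mulr1.
  by rewrite scalerDl addrCA.
move=> [gd <-]; split; first by rewrite /derivable E.
by rewrite /derive E.
Qed.

Lemma is_derive_line0 {V W : normedModType R} {g : V -> W} {u a dg} :
  is_derive u a g dg -> is_derive (0 : R) 1 (fun t : R => g (u + t *: a)) dg.
Proof. by move=> h; apply: is_derive_line; rewrite scale0r addr0. Qed.

Lemma derive_locally_cst {V W : normedModType R} {f : V -> W} {D : set V} {u v} (c : W) :
  open D -> D u -> (forall x, D x -> f x = c) -> 'D_v f u = 0.
Proof.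
move=> oD Du H; rewrite (@near_eq_derive R _ _ f (cst c) u v); first exact: derive_cst.
have : \forall x \near u, D x by apply: open_nbhs_nbhs; split.
by apply: filter_app; near=> x => Dx; apply: H.
Unshelve. all: by end_near.
Qed.

Lemma is_derive_affine {V : normedModType R} (x b : V) :
  is_derive (0 : R) 1 (fun t : R => x + t *: b) b.
Proof. exact: is_derive_line0 (is_derive_id x b). Qed.

Lemma MVT_dir {V : normedModType R} (f : V -> R) (p v : V) (h : R) :
  (forall c, `|c| <= `|h| -> derivable f (p + c *: v) v) ->
  exists c, `|c| <= `|h| /\ f (p + h *: v) - f p = h * 'D_v f (p + c *: v).
Proof.
move=> hd; pose phi t := f (p + t *: v).
have dphi (c : R) : `|c| <= `|h| -> is_derive c 1 phi ('D_v f (p + c *: v)).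
  by move=> hc; apply: is_derive_line; apply: derivableP; apply: hd.
have cphi (c : R) : `|c| <= `|h| -> {for c, continuous phi}.
  move=> hc; apply: differentiable_continuous; apply/derivable1_diffP.
  by have [] := dphi c hc.
have phi0 : phi 0 = f p by rewrite /phi scale0r addr0.
have [h0|h0] := leP 0 h.
- have [] := @MVT_segment R phi (fun c => 'D_v f (p + c *: v)) 0 h h0.
  + move=> x; rewrite in_itv /= => /andP[x0 xh]; apply: dphi.
    rewrite !ger0_norm //; lra.
  + apply: continuous_subspace_itv => x; rewrite in_itv /= => /andP[x0 xh].
    by apply: cphi; rewrite !ger0_norm.
  move=> c; rewrite in_itv /= => /andP[c0 ch] E; exists c; split.
    by rewrite !ger0_norm.
  by rewrite -phi0 -/(phi h) E subr0 mulrC.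
- have [] := @MVT_segment R phi (fun c => 'D_v f (p + c *: v)) h 0 (ltW h0).
  + move=> x; rewrite in_itv /= => /andP[x0 xh]; apply: dphi.
    rewrite !ler0_norm ?ltW //; lra.
  + apply: continuous_subspace_itv => x; rewrite in_itv /= => /andP[x0 xh].
    by apply: cphi; rewrite !ler0_norm //; lra.
  move=> c; rewrite in_itv /= => /andP[c0 ch] E; exists c; split.
    by rewrite !ler0_norm //; lra.
  rewrite -phi0 -/(phi h); move: E; rewrite sub0r mulrN => E.
  by rewrite -opprB E opprK mulrC.
Qed.

End DerivativeRules.

Section ContinuousPartials.
Context {R : realType}.

Lemma mx_coord_le_norm {m k : nat} (w : 'M[R]_(m, k)) i j : `|w i j| <= `|w|.
Proof.
rewrite [leRHS]/Num.Def.normr/= mx_normrE.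
by apply: le_trans; last exact: (le_bigmax _ _ (i, j)).
Qed.

Lemma mx_norm_le {m k : nat} (w : 'M[R]_(m, k)) B : 0 <= B ->
  (forall i j, `|w i j| <= B) -> `|w| <= B.
Proof.
move=> B0 H; rewrite [leLHS]/Num.Def.normr/= mx_normrE.
by apply: bigmax_le => // -[i j] _; apply: H.
Qed.

Context {s : nat}.
Implicit Types (a : 'rV[R]_s) (f : 'rV[R]_s -> R).

(* The points u + x *: row_trunc a k, k = 0..s, form a staircase from u to
   u + x *: a whose steps are parallel to the coordinate axes. *)
Definition row_trunc a (k : nat) : 'rV[R]_s := \row_j (if (j < k)%N then a 0 j else 0).

Lemma row_trunc0 a : row_trunc a 0 = 0.
Proof. by apply/rowP => j; rewrite !mxE. Qed.

Lemma row_trunc_size a : row_trunc a s = a.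
Proof. by apply/rowP => j; rewrite !mxE ltn_ord. Qed.

Lemma row_truncS a (k : 'I_s) : row_trunc a k.+1 = row_trunc a k + a 0 k *: ebasis k.
Proof.
apply/rowP => j; rewrite !mxE ltnS leq_eqVlt eqxx /=.
case: (eqVneq j k) => [->|jk] /=; first by rewrite eqxx ltnn /= mulr1 add0r.
have /negbTE -> : nat_of_ord j != k by [].
by rewrite /= mulr0 addr0.
Qed.

Lemma norm_staircase_step a (x c : R) (m : nat) (k : 'I_s) :
  `|c| <= `|x| * `|a| -> `|x *: row_trunc a m + c *: ebasis k| <= 2 * (`|x| * `|a|).
Proof.
move=> hc; apply: mx_norm_le; first by have := normr_ge0 x; have := normr_ge0 a; nra.
move=> i j; rewrite !mxE; apply: (le_trans (ler_normD _ _)); rewrite !normrM.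
have h1 : `|if (j < m)%N then a 0 j else 0| <= `|a|.
  by case: ifP => _; rewrite ?normr0 ?mx_coord_le_norm.
have h2 : `|((i == 0) && (j == k))%:R : R| <= 1.
  by case: (_ && _); rewrite ?normr1 ?normr0.
have := normr_ge0 x; have := normr_ge0 c; have := normr_ge0 a; nra.
Qed.

Lemma staircase_MVT f (u a : 'rV[R]_s) (x : R) :
  (forall (k : 'I_s) c, `|c| <= `|x * a 0 k| ->
     derivable f (u + x *: row_trunc a k + c *: ebasis k) (ebasis k)) ->
  exists c : 'I_s -> R, (forall k, `|c k| <= `|x * a 0 k|) /\
    f (u + x *: a) - f u =
    x * \sum_k a 0 k * partial k f (u + x *: row_trunc a k + c k *: ebasis k).
Proof.
move=> fd.
have step (k : 'I_s) : exists c : R, `|c| <= `|x * a 0 k| /\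
    f (u + x *: row_trunc a k.+1) - f (u + x *: row_trunc a k) =
    (x * a 0 k) * partial k f (u + x *: row_trunc a k + c *: ebasis k).
  by rewrite row_truncS scalerDr scalerA addrA; apply: MVT_dir => c hc; apply: fd.
have [c hc] := choice step; exists c; split=> [k|]; first by case: (hc k).
have := telescope_sumr (fun k => f (u + x *: row_trunc a k)) (leq0n s).
rewrite row_trunc_size row_trunc0 scaler0 addr0 => <-; rewrite big_mkord mulr_sumr.
by apply: eq_bigr => k _; case: (hc k) => _ ->; rewrite mulrA.
Qed.

Lemma is_derive_continuous_partials f (D : set 'rV[R]_s) u0 a :
  open D -> D u0 ->
  (forall u j, D u -> derivable f u (ebasis j)) ->
  (forall j, {for u0, continuous (partial j f)}) ->
  is_derive u0 a f (\sum_j a 0 j * partial j f u0).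
Proof.
move=> oD Du0 fd fc; set L := \sum_j _.
suff H : (fun h : R => h^-1 *: ((f \o shift u0) (h *: a) - f u0)) @ 0^' --> L.
  split; first by apply/cvg_ex; exists L.
  by rewrite /derive; apply: cvg_lim.
apply/cvgrPdist_le => e e0.
set M := \sum_(j < s) `|a 0 j| + 1.
have M0 : 0 < M.
  have : 0 <= \sum_(j < s) `|a 0 j| by apply: sumr_ge0.
  by rewrite /M; lra.
have eM0 : 0 < e / M by apply: divr_gt0.
have near_u0 : \forall u \near u0,
    D u /\ forall j, `|partial j f u0 - partial j f u| <= e / M.
  near=> u; split; first by near: u; apply: open_nbhs_nbhs.
  near: u; apply: filter_forall => j.
  by have /cvgrPdist_le /(_ (e / M) eM0) := fc j.
move/nbhs_ballP: near_u0 => [d d0 Hd].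
have A0 := normr_ge0 a.
have dA : 0 < d / (2 * `|a| + 1) by apply: divr_gt0 => //; lra.
near=> x.
have xn0 : x != 0 by near: x; exact: nbhs_dnbhs_neq.
have xs : `|x| < d / (2 * `|a| + 1) by near: x; apply: dnbhs0_lt.
have xs' : `|x| * (2 * `|a| + 1) < d by rewrite -ltr_pdivlMr //; lra.
have near_step (k : 'I_s) c : `|c| <= `|x * a 0 k| ->
    ball u0 d (u0 + x *: row_trunc a k + c *: ebasis k).
  move=> hc; rewrite -ball_normE /ball_ /= -addrA opprD addrA subrr add0r normrN.
  apply: (le_lt_trans (norm_staircase_step a x c k k _)).
    by apply: le_trans hc _; rewrite normrM ler_wpM2l // mx_coord_le_norm.
  have := normr_ge0 x; nra.
have [c [hc tel]] := staircase_MVT f u0 a x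
  (fun k c hc => fd _ k (Hd _ (near_step k c hc)).1).
rewrite /= (addrC (x *: a)) tel [_ *: _]mulKf //.
rewrite /L -sumrB; apply: (le_trans (ler_norm_sum _ _ _)).
apply: (@le_trans _ _ (\sum_(k < s) `|a 0 k| * (e / M))).
  apply: ler_sum => k _; rewrite -mulrBr normrM ler_wpM2l //.
  exact: (Hd _ (near_step k (c k) (hc k))).2.
rewrite -mulr_suml mulrA ler_pdivrMr // /M; nra.
Unshelve. all: by end_near.
Qed.

Lemma is_derive_continuous_partials_mx {p m : nat} (f : 'rV[R]_s -> 'M[R]_(p, m))
    (D : set 'rV[R]_s) u0 a :
  open D -> D u0 ->
  (forall u j, D u -> derivable f u (ebasis j)) ->
  (forall j, {for u0, continuous (partial j f)}) ->
  is_derive u0 a f (\sum_j a 0 j *: partial j f u0).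
Proof.
move=> oD Du0 fd fc; apply: is_derive_mx => i k.
have partial_coord u j : D u -> partial j (fun x => f x i k) u = partial j f u i k.
  by move=> Du; rewrite /partial derive_mx ?mxE //; apply: fd.
rewrite summxE.
under eq_bigr do rewrite mxE -partial_coord //.
apply: (@is_derive_continuous_partials (fun x => f x i k) D u0 a oD Du0).
  by move=> u j Du; move/derivable_mxP: (fd u j Du); apply.
move=> j; rewrite /continuous_at; apply/(@cvgrPdist_le R R _ (nbhs u0) _) => e e0.
have nD : \forall u \near u0, D u by apply: open_nbhs_nbhs; split.
have /cvgrPdist_le /(_ e e0) := fc j.
apply: filter_app; near=> u => /= Hu.
rewrite !partial_coord //; last by near: u.
have -> : partial j f u0 i k - partial j f u i k = (partial j f u0 - partial j f u) i k.
  by rewrite !mxE.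
by apply: le_trans Hu; exact: mx_coord_le_norm.
Unshelve. all: by end_near.
Qed.

End ContinuousPartials.

Section FrameCalculus.
Context {R : realType} {s n : nat}.
Implicit Types (u a : 'rV[R]_s) (xi : 'rV[R]_n.+1).

Lemma smooth_on_derivable {V : normedModType R} {D : set 'rV[R]_s}
    {f : 'rV[R]_s -> V} l :
  smooth_on D f -> forall i u, D u -> derivable (iter_partial l f) u (ebasis i).
Proof. by move=> h; case: (h l). Qed.

Lemma smooth_on_continuous {V : normedModType R} {D : set 'rV[R]_s}
    {f : 'rV[R]_s -> V} l :
  smooth_on D f -> forall u, D u -> {for u, continuous (iter_partial l f)}.
Proof. by move=> h; case: (h l). Qed.

Lemma tangent_vecZ (X : 'rV[R]_s -> 'rV[R]_n.+1) u k a :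
  tangent_vec X u (k *: a) = k *: tangent_vec X u a.
Proof.
by rewrite /tangent_vec scaler_sumr; apply: eq_bigr => i _; rewrite mxE scalerA.
Qed.

Lemma tangent_vec0 (X : 'rV[R]_s -> 'rV[R]_n.+1) u : tangent_vec X u 0 = 0.
Proof. by rewrite -(scale0r 0) tangent_vecZ scale0r. Qed.

Lemma derive1_lprod_line (g : 'rV[R]_s -> 'rV[R]_n.+1) u a xi b dg :
  is_derive u a g dg ->
  derive1 (fun t : R => lprod (xi + t *: b) (g (u + t *: a))) 0 =
  lprod b (g u) + lprod xi dg.
Proof.
move=> h; rewrite derive1E.
have [_ ->] := is_derive_lprod (is_derive_affine xi b) (is_derive_line0 h).
by rewrite !scale0r !addr0.
Qed.

Lemma derive1_lprod_affine xi b :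
  derive1 (fun t : R => lprod (xi + t *: b) (xi + t *: b)) 0 = lprod b xi + lprod xi b.
Proof.
rewrite derive1E.
have [_ ->] := is_derive_lprod (is_derive_affine xi b) (is_derive_affine xi b).
by rewrite !scale0r !addr0.
Qed.

End FrameCalculus.

Section SpacelikeSubmanifold.
Context {R : realType} {s n : nat}.
Implicit Types (u a : 'rV[R]_s) (v : 'rV[R]_n.+1).
Variables (U : set 'rV[R]_s) (X nT : 'rV[R]_s -> 'rV[R]_n.+1) (u0 : 'rV[R]_s).
Hypotheses (oU : open U) (hX : spacelike_embedding U X)
  (hN : future_unit_timelike_normal U X nT) (Uu0 : U u0).

Let sX : smooth_on U X. Proof. by case: hX. Qed.
Let sN : smooth_on U nT. Proof. by case: hN. Qed.

Lemma is_derive_X {u} j : U u -> is_derive u (ebasis j) X (partial j X u).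
Proof. by move=> Uu; apply: derivableP; exact: smooth_on_derivable [::] sX j _ Uu. Qed.

Lemma is_derive_dX {u} l j :
  U u -> is_derive u (ebasis j) (partial l X) (partial j (partial l X) u).
Proof. by move=> Uu; apply: derivableP; exact: smooth_on_derivable [:: l] sX j _ Uu. Qed.

Lemma is_derive_nT {u} j : U u -> is_derive u (ebasis j) nT (partial j nT u).
Proof. by move=> Uu; apply: derivableP; exact: smooth_on_derivable [::] sN j _ Uu. Qed.

Definition dX a (l : 'I_s) : 'rV[R]_n.+1 :=
  \sum_j a 0 j *: partial j (partial l X) u0.
Definition dnT a : 'rV[R]_n.+1 := \sum_j a 0 j *: partial j nT u0.

Lemma is_derive_dX_dir l a : is_derive u0 a (partial l X) (dX a l).
Proof.
apply: is_derive_continuous_partials_mx oU Uu0 _ _.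
  by move=> u j Uu; exact: (smooth_on_derivable [:: l] sX j _ Uu).
by move=> j; exact: (smooth_on_continuous [:: j; l] sX _ Uu0).
Qed.

Lemma is_derive_dnT_dir a : is_derive u0 a nT (dnT a).
Proof.
apply: is_derive_continuous_partials_mx oU Uu0 _ _.
  by move=> u j Uu; exact: (smooth_on_derivable [::] sN j _ Uu).
by move=> j; exact: (smooth_on_continuous [:: j] sN _ Uu0).
Qed.

Lemma partial_lprod_X_nT l j :
  lprod (partial j (partial l X) u0) (nT u0)
  + lprod (partial l X u0) (partial j nT u0) = 0.
Proof.
have [_ <-] := is_derive_lprod (is_derive_dX l j Uu0) (is_derive_nT j Uu0).
apply: (derive_locally_cst 0 oU Uu0) => x Ux.
by rewrite lprodC; case: hN => _ /(_ x Ux) [/(_ l)].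
Qed.

Lemma partial_lprod_nT_nT j : lprod (partial j nT u0) (nT u0) = 0.
Proof.
have [_ E] := is_derive_lprod (is_derive_nT j Uu0) (is_derive_nT j Uu0).
have : lprod (partial j nT u0) (nT u0) + lprod (nT u0) (partial j nT u0) = 0.
  rewrite -E; apply: (derive_locally_cst (-1 : R) oU Uu0) => x Ux.
  by case: hN => _ /(_ x Ux) [].
by rewrite lprodC -mulr2n => /eqP; rewrite mulrn_eq0 /= => /eqP.
Qed.

Lemma partial_Hfun v i : partial i (fun u => Hfun X u v) u0 = lprod (partial i X u0) v.
Proof. by have [_ E] := is_derive_lprodl v (is_derive_X i Uu0); exact: E. Qed.

Lemma hessian_hfunE v j l :
  hessian (hfun X v) u0 j l = lprod (partial j (partial l X) u0) v.
Proof.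
rewrite /hessian mxE.
have -> : partial j (partial l (hfun X v)) u0 =
          partial j (fun u => lprod (partial l X u) v) u0.
  apply: near_eq_derive.
  have : \forall x \near u0, U x by apply: open_nbhs_nbhs; split.
  apply: filter_app; near=> x => Ux.
  by have [_ E] := is_derive_lprodl v (is_derive_X l Ux); exact: E.
by have [_ E] := is_derive_lprodl v (is_derive_dX l j Uu0); exact: E.
Unshelve. all: by end_near.
Qed.

Lemma lprod_tangent_vec a b :
  lprod (tangent_vec X u0 a) (tangent_vec X u0 b) = (a *m gram X u0 *m b^T) 0 0.
Proof.
rewrite /tangent_vec lprod_suml mxE.
under eq_bigr do rewrite lprodZl lprod_sumr mulr_sumr.
under [RHS]eq_bigr do rewrite !mxE mulr_suml.
rewrite exchange_big; apply: eq_bigr => i _; apply: eq_bigr => k _.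
by rewrite lprodZr /gram mxE; ring.
Qed.

Lemma gram_pos a : a != 0 -> 0 < (a *m gram X u0 *m a^T) 0 0.
Proof.
by move=> a0; rewrite -lprod_tangent_vec; case: hX => _ _ _ /(_ u0 Uu0 a a0).
Qed.

Lemma gram_unit : gram X u0 \in unitmx.
Proof.
rewrite unitmxE unitfE; apply/negP => /det0P [a a0 aG].
by have := gram_pos a a0; rewrite aG mul0mx mxE ltxx.
Qed.

Lemma tangent_vec_inj a : tangent_vec X u0 a = 0 -> a = 0.
Proof.
move=> T0; apply/eqP; apply/negP => /negP a0.
by case: hX => _ _ _ /(_ u0 Uu0 a a0); rewrite T0 lprod0l ltxx.
Qed.

Lemma row_lprod_tangent_vec a :
  \row_l lprod (tangent_vec X u0 a) (partial l X u0) = a *m gram X u0.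
Proof.
apply/rowP => l; rewrite !mxE /tangent_vec lprod_suml.
by apply: eq_bigr => i _; rewrite lprodZl !mxE.
Qed.

Lemma tcoords_tangent_vec a : tcoords X u0 (tangent_vec X u0 a) = a.
Proof. by rewrite /tcoords row_lprod_tangent_vec mulmxK // gram_unit. Qed.

Let nT_u0 : [/\ in_normal X u0 (nT u0), lprod (nT u0) (nT u0) = -1 & 0 < nT u0 0 ord0].
Proof. by case: hN => _ /(_ u0 Uu0). Qed.

(* A normal lightlike v0 is recovered from xi := - v0 / <v0, n^T> - n^T. *)
Lemma critical_Hfun_iff_LGt v0 : in_Splus v0 ->
  (forall i, partial i (fun u => Hfun X u v0) u0 = 0) <->
  exists2 xi0, in_N1 X nT u0 xi0 & v0 = LGt nT u0 xi0.
Proof.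
have [nTn nTT _] := nT_u0; move=> [vv v00]; split.
- move=> crit.
  have vX i : lprod v0 (partial i X u0) = 0 by rewrite lprodC -partial_Hfun crit.
  set q := lprod v0 (nT u0).
  have q0 : q != 0 by apply: lprod_lightlike_timelike_neq0.
  have mq : - q^-1 * q = -1 by rewrite mulNr mulVf.
  exists (- q^-1 *: v0 - nT u0).
    split.
    + by move=> i; rewrite lprodBl lprodZl vX nTn mulr0 subr0.
    + rewrite !lprodBl !lprodBr !lprodZl !lprodZr vv nTT (lprodC (nT u0) v0) -/q.
      by rewrite !mulr0 mq; ring.
    + by rewrite lprodBl lprodZl -/q mq nTT opprK addNr.
  rewrite /LGt /tilde addrC subrK mxE v00 mulr1 scalerA mulVf ?scale1r //.
  by rewrite oppr_eq0 invr_eq0.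
- move=> [xi [xn _ _] ->] i.
  by rewrite partial_Hfun /LGt /tilde lprodZr lprodDr lprodC nTn lprodC xn addr0 mulr0.
Qed.

Variables (v0 xi0 : 'rV[R]_n.+1).
Hypotheses (hS : in_Splus v0) (hxi : in_N1 X nT u0 xi0) (hv : v0 = LGt nT u0 xi0).

Local Notation Hess := (hessian (hfun X v0) u0).

Definition c0 : R := (nT u0 + xi0) 0 ord0.

Lemma c0_neq0 : c0 != 0.
Proof.
apply/negP => /eqP c00; have [_ v00] := hS.
move: v00; rewrite hv /LGt /tilde -/c0 c00 invr0 scale0r mxE => /eqP.
by rewrite eq_sym oner_eq0.
Qed.

Lemma nT_add_xi0 : nT u0 + xi0 = c0 *: v0.
Proof. by rewrite hv /LGt /tilde -/c0 scalerA mulfV ?c0_neq0 // scale1r. Qed.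

Lemma lprod_v0_X l : lprod v0 (partial l X u0) = 0.
Proof.
have [nTn _ _] := nT_u0; have [xn _ _] := hxi.
by rewrite hv /LGt /tilde lprodZl lprodDl nTn xn addr0 mulr0.
Qed.

Lemma lprod_v0_nT : lprod v0 (nT u0) = - c0^-1.
Proof.
have [_ nTT _] := nT_u0; have [_ _ xnT] := hxi.
by rewrite hv /LGt /tilde -/c0 lprodZl lprodDl nTT xnT addr0 mulrN1.
Qed.

Lemma lprod_v0_xi0 : lprod v0 xi0 = c0^-1.
Proof.
have [_ xx xnT] := hxi.
by rewrite hv /LGt /tilde -/c0 lprodZl lprodDl lprodC xnT xx add0r mulr1.
Qed.

Lemma lprod_dnT_X a l : lprod (dnT a) (partial l X u0) = - lprod (dX a l) (nT u0).
Proof.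
rewrite /dnT /dX lprod_suml lprod_suml -sumrN; apply: eq_bigr => j _.
rewrite !lprodZl -mulrN; congr (_ * _).
have /eqP := partial_lprod_X_nT l j.
by rewrite (lprodC (partial l X u0)) addrC addr_eq0 => /eqP.
Qed.

Lemma lprod_dnT_nT a : lprod (dnT a) (nT u0) = 0.
Proof.
by rewrite /dnT lprod_suml big1 // => j _; rewrite lprodZl partial_lprod_nT_nT mulr0.
Qed.

Lemma lprod_dX_v0 a l : lprod (dX a l) v0 = (a *m Hess) 0 l.
Proof.
rewrite /dX lprod_suml mxE; apply: eq_bigr => j _.
by rewrite lprodZl hessian_hfunE.
Qed.

Lemma tangent_N1E a b : tangent_N1 X nT u0 xi0 a b <->
  [/\ forall i, lprod b (partial i X u0) + lprod xi0 (dX a i) = 0,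
      lprod b (nT u0) + lprod xi0 (dnT a) = 0
    & lprod b xi0 + lprod xi0 b = 0].
Proof.
rewrite /tangent_N1 derive1_lprod_affine.
rewrite (derive1_lprod_line _ _ _ _ _ _ (is_derive_dnT_dir a)).
have E i : derive1 (fun t : R => lprod (xi0 + t *: b) (partial i X (u0 + t *: a))) 0
    = lprod b (partial i X u0) + lprod xi0 (dX a i).
  exact: derive1_lprod_line _ _ _ _ _ _ (is_derive_dX_dir i a).
by split => -[h1 h2 h3]; split => // i; [rewrite -E | rewrite E].
Qed.

Lemma derive1_LGt a b :
  derive1 (fun t : R => LGt nT (u0 + t *: a) (xi0 + t *: b)) 0 =
  c0^-1 *: ((dnT a + b) - (dnT a + b) 0 ord0 *: v0).
Proof.
pose Phi t := nT (u0 + t *: a) + (xi0 + t *: b).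
set D := dnT a + b.
have hP : is_derive (0 : R) 1 Phi D.
  exact: is_deriveD (is_derive_line0 (is_derive_dnT_dir a)) (is_derive_affine xi0 b).
have P0 : Phi 0 = nT u0 + xi0 by rewrite /Phi !scale0r !addr0.
have [_ v00] := hS.
rewrite derive1E.
suff [_ ->] : is_derive (0 : R) 1 (fun t : R => LGt nT (u0 + t *: a) (xi0 + t *: b))
    (c0^-1 *: (D - D 0 ord0 *: v0)) by [].
apply: is_derive_mx => i k.
have e1 := is_derive_coord _ _ _ _ i k hP.
have e0 := is_derive_coord _ _ _ _ 0 ord0 hP.
have P00 : Phi 0 0 ord0 != 0 by rewrite P0; exact: c0_neq0.
have e0i : is_derive (0 : R) 1 (fun t => (Phi t 0 ord0)^-1)
                     (- (Phi 0 0 ord0) ^- 2 *: D 0 ord0).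
  split; first by apply: derivableV => //; case: e0.
  by rewrite deriveV //; case: e0 => _ ->.
have -> : (fun t : R => LGt nT (u0 + t *: a) (xi0 + t *: b) i k) =
    (fun t => (Phi t 0 ord0)^-1) * (fun t => Phi t i k).
  by apply/funext => t; rewrite /LGt /tilde mxE.
apply: (is_derive_eq (is_deriveM e0i e1)).
have sE (x y : R) : x *: y = x * y by [].
rewrite /Phi !scale0r !addr0 nT_add_xi0 !mxE [i]ord1 v00 !sE mulr1.
by field; exact: c0_neq0.
Qed.

Lemma lprod_derive1_LGt_X {a b} l : tangent_N1 X nT u0 xi0 a b ->
  lprod (derive1 (fun t : R => LGt nT (u0 + t *: a) (xi0 + t *: b)) 0) (partial l X u0)
  = - (a *m Hess) 0 l.
Proof.
move=> /tangent_N1E [tX _ _].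
rewrite derive1_LGt lprodZl lprodBl lprodZl lprod_v0_X mulr0 subr0 lprodDl lprod_dnT_X.
have /eqP := tX l; rewrite (lprodC xi0) addr_eq0 => /eqP ->.
rewrite -opprD -lprodDr nT_add_xi0 lprodZr lprod_dX_v0.
by rewrite mulrN mulrA mulVf ?mul1r // c0_neq0.
Qed.

Lemma lprod_orth_v0_xi0 w : lprod v0 w = 0 -> lprod w xi0 = - lprod w (nT u0).
Proof.
move=> wv; have : lprod w (nT u0 + xi0) = 0 by rewrite nT_add_xi0 lprodZr lprodC wv mulr0.
by rewrite lprodDr => /eqP; rewrite addrC addr_eq0 => /eqP.
Qed.

(* Given the target w, the tangential equations force a Hess = - <w, X_u>,
   and b is then chosen to match w. *)
Lemma nondeg_critical_LG_regular :
  nondeg_critical (hfun X v0) u0 -> LG_regular_point X nT u0 xi0.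
Proof.
have c0n := c0_neq0; have [_ v00] := hS.
move=> [_ dH] w; rewrite -hv => -[wv w0].
have Hu : Hess \in unitmx by rewrite unitmxE unitfE.
set r := \row_l lprod w (partial l X u0).
set a := - (r *m invmx Hess).
have aH : a *m Hess = - r by rewrite /a mulNmx mulmxKV.
set lam := c0 * (c0 * lprod w (nT u0) + lprod xi0 (dnT a)).
exists a, (c0 *: w + lam *: v0 - dnT a); split.
  apply/tangent_N1E; split.
  - move=> l; rewrite !lprodBl !lprodDl !lprodZl lprod_v0_X lprod_dnT_X mulr0 addr0.
    rewrite (lprodC xi0) opprK -addrA -lprodDr nT_add_xi0 lprodZr lprod_dX_v0 aH.
    by rewrite !mxE; ring.
  - by rewrite !lprodBl !lprodDl !lprodZl lprod_v0_nT lprod_dnT_nT /lam; field.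
  - rewrite (lprodC xi0) !lprodBl !lprodDl !lprodZl lprod_v0_xi0 /lam.
    by rewrite lprod_orth_v0_xi0 // (lprodC (dnT a)); field.
rewrite derive1_LGt [dnT a + _]addrC subrK !mxE w0 v00 mulr0 add0r mulr1 addrK.
by rewrite scalerA mulVf // scale1r.
Qed.

(* A kernel vector z of Hess gives the target w = dX_u0(z) - (dX_u0(z))_0 v0;
   a preimage (a, b) would satisfy z G = - a Hess, hence z G z^T = 0. *)
Lemma LG_regular_nondeg_critical :
  LG_regular_point X nT u0 xi0 -> nondeg_critical (hfun X v0) u0.
Proof.
have [vv v00] := hS.
move=> reg; split.
  by move=> i; have := (critical_Hfun_iff_LGt v0 hS).2 (ex_intro2 _ _ xi0 hxi hv) i.
apply/negP => /eqP dH.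
have [z z0 zH] : exists2 z : 'rV[R]_s, z != 0 & z *m Hess^T = 0.
  by apply/det0P; rewrite det_tr dH.
set T := tangent_vec X u0 z.
set w := T - T 0 ord0 *: v0.
have vT : lprod v0 T = 0.
  by rewrite /T /tangent_vec lprod_sumr big1 // => i _; rewrite lprodZr lprod_v0_X mulr0.
have [a [b [tN dLG]]] : exists a b, tangent_N1 X nT u0 xi0 a b /\
    derive1 (fun t : R => LGt nT (u0 + t *: a) (xi0 + t *: b)) 0 = w.
  apply: reg; rewrite -hv; split.
    by rewrite lprodBr lprodZr vT vv mulr0 subr0.
  by rewrite /w !mxE v00 mulr1 subrr.
have zG : z *m gram X u0 = - (a *m Hess).
  apply/rowP => l; rewrite -row_lprod_tangent_vec !mxE.
  have := lprod_derive1_LGt_X l tN.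
  by rewrite dLG /w lprodBl lprodZl lprod_v0_X mulr0 subr0 => ->; rewrite mxE.
have := gram_pos z z0; rewrite zG mulNmx -mulmxA.
have -> : Hess *m z^T = 0 by rewrite -[Hess]trmxK -trmx_mul zH trmx0.
by rewrite mulmx0 oppr0 mxE ltxx.
Qed.

Variables (W : set 'rV[R]_s) (nS : 'rV[R]_s -> 'rV[R]_n.+1).
Hypotheses (oW : open W) (Wu0 : W u0) (sS : smooth_on W nS)
  (hNS : forall u, W u -> in_N1 X nT u (nS u)) (nS0 : nS u0 = xi0).

Let is_derive_nS j : is_derive u0 (ebasis j) nS (partial j nS u0).
Proof. by apply: derivableP; exact: smooth_on_derivable [::] sS j _ Wu0. Qed.

Lemma partial_lprod_X_nS l j :
  lprod (partial j (partial l X) u0) (nS u0)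
  + lprod (partial l X u0) (partial j nS u0) = 0.
Proof.
have [_ <-] := is_derive_lprod (is_derive_dX l j Uu0) (is_derive_nS j).
apply: (derive_locally_cst 0 oW Wu0) => x Wx.
by rewrite lprodC; case: (hNS x Wx) => /(_ l).
Qed.

Lemma lprod_partial_nTnS_X j l :
  lprod (partial j (nT \+ nS) u0) (partial l X u0) = - c0 * Hess j l.
Proof.
have [_ E] := is_deriveD (is_derive_nT j Uu0) (is_derive_nS j).
rewrite -[partial j (nT \+ nS) u0]/('D_(ebasis j) (nT + nS) u0) E.
rewrite lprodDl (lprodC (partial j nT u0)) (lprodC (partial j nS u0)).
have /eqP := partial_lprod_X_nT l j; rewrite addrC addr_eq0 => /eqP ->.
have /eqP := partial_lprod_X_nS l j; rewrite addrC addr_eq0 => /eqP ->.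
by rewrite nS0 -opprD -lprodDr nT_add_xi0 lprodZr hessian_hfunE; ring.
Qed.

Lemma shape_opE a :
  shape_op X nT nS u0 a = tangent_vec X u0 (c0 *: (a *m Hess *m invmx (gram X u0))).
Proof.
rewrite /shape_op /tangent_proj -scaleN1r -tangent_vecZ; congr tangent_vec.
rewrite /tcoords !scalemxAl; congr (_ *m _).
apply/rowP => l; rewrite !mxE lprod_suml mulr_sumr; apply: eq_bigr => j _.
by rewrite lprodZl lprod_partial_nTnS_X !mxE; ring.
Qed.

Lemma shape_mxE : shape_mx X nT nS u0 = c0 *: (Hess *m invmx (gram X u0)).
Proof.
apply/matrixP => j k; rewrite /shape_mx [LHS]mxE shape_opE tcoords_tangent_vec.
by rewrite [LHS]mxE [RHS]mxE; congr (_ * _); rewrite /ebasis -rowE -row_mul mxE.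
Qed.

Lemma Kl_eq0_iff : Kl X nT nS u0 = 0 <-> \det Hess = 0.
Proof.
rewrite /Kl shape_mxE detZ det_mulmx det_inv.
have G0 : \det (gram X u0) != 0 by have := gram_unit; rewrite unitmxE unitfE.
split => [/eqP|->]; last by rewrite mul0r mulr0.
rewrite !mulf_eq0 expf_eq0 (negbTE c0_neq0) andbF /= invr_eq0 (negbTE G0) orbF.
by move/eqP.
Qed.

Lemma flat_umbilical_iff : flat_umbilical X nT nS u0 <-> \rank Hess = 0%N.
Proof.
rewrite /flat_umbilical; split.
- move=> flat; apply/eqP; rewrite mxrank_eq0; apply/eqP.
  apply/row_matrixP => j; rewrite row0 rowE.
  have := flat (delta_mx 0 j); rewrite shape_opE => /tangent_vec_inj /eqP.
  rewrite scaler_eq0 (negbTE c0_neq0) /= => /eqP E.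
  by rewrite -[_ *m Hess](mulmxKV gram_unit) E mul0mx.
- move/eqP; rewrite mxrank_eq0 => /eqP H0 a.
  by rewrite shape_opE H0 mulmx0 mul0mx scaler0 tangent_vec0.
Qed.

End SpacelikeSubmanifold.

Theorem proposition5p1 (R : realType) (s n : nat) (U : set 'rV[R]_s)
  (X nT : 'rV[R]_s -> 'rV[R]_n.+1) (u0 : 'rV[R]_s) (v0 : 'rV[R]_n.+1) :
  open U -> spacelike_embedding U X -> future_unit_timelike_normal U X nT ->
  U u0 -> in_Splus v0 ->
  ((forall i : 'I_s, partial i (fun u => Hfun X u v0) u0 = 0) <->
     exists2 xi0 : 'rV[R]_n.+1, in_N1 X nT u0 xi0 & v0 = LGt nT u0 xi0)
  /\
  (forall xi0 : 'rV[R]_n.+1, in_N1 X nT u0 xi0 -> v0 = LGt nT u0 xi0 ->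
   forall (W : set 'rV[R]_s) (nS : 'rV[R]_s -> 'rV[R]_n.+1),
     open W -> W `<=` U -> W u0 -> smooth_on W nS ->
     (forall u, W u -> in_N1 X nT u (nS u)) -> nS u0 = xi0 ->
     [/\ Kl X nT nS u0 = 0 <-> \det (hessian (hfun X v0) u0) = 0,
         flat_umbilical X nT nS u0 <-> \rank (hessian (hfun X v0) u0) = 0%N
       & nondeg_critical (hfun X v0) u0 <-> LG_regular_point X nT u0 xi0]).
Proof.
move=> oU hX hN Uu0 hS; split.
  exact: (critical_Hfun_iff_LGt _ _ _ _ hX hN Uu0 _ hS).
move=> xi0 hxi hv W nS oW _ Wu0 sS hNS nS0; split.
- exact: (Kl_eq0_iff _ _ _ _ oU hX hN Uu0 _ _ hS hv _ _ oW Wu0 sS hNS nS0).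
- exact: (flat_umbilical_iff _ _ _ _ oU hX hN Uu0 _ _ hS hv _ _ oW Wu0 sS hNS nS0).
- split; first exact: (nondeg_critical_LG_regular _ _ _ _ oU hX hN Uu0 _ _ hS hxi hv).
  exact: (LG_regular_nondeg_critical _ _ _ _ oU hX hN Uu0 _ _ hS hxi hv).
Qed.
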